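(* Let $(V_1,\dots,V_n)$ be an $n$-tuple of doubly non-commuting isometries on $H$ and let $1\le l\le n$. If $V_1,\dots,V_l$ are pure isometries and $\dim\big(\bigcap_{i=1}^l\ker V_i^*\big)<\infty$, then $V_{l+1},\dots,V_n$ are unitary operators on $H$.
   Context: Fix $n\ge1$ and $z_{ij}\in\mathbb T$ ($i\ne j$) with $z_{ji}=\overline{z_{ij}}$; $(V_1,\dots,V_n)$ is doubly non-commuting if the $V_i$ are isometries with $V_i^*V_j=\overline{z_{ij}}V_jV_i^*$ for $i\ne j$. An isometry $S$ on $H$ is a pure isometry if $\{0\}$ is the only $S$-invariant subspace of $H$ on which $S$ is unitary. *)

From HB Require Import structures.
From mathcomp Require Import all_boot all_order all_algebra.
From mathcomp.real_closed Require Import complex.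
Set Implicit Arguments. Unset Strict Implicit. Unset Printing Implicit Defensive.
Import Order.TTheory GRing.Theory Num.Theory.
Local Open Scope ring_scope.

Section Hilbert.
Variables (R : rcfType) (H : lmodType R[i]) (ip : H -> H -> R[i]).

Definition inner_product : Prop :=
  [/\ forall (a : R[i]) (x y z : H), ip (a *: x + y) z = a * ip x z + ip y z,
      forall x y : H, ip y x = (ip x y)^*,
      forall x : H, 0 <= ip x x &
      forall x : H, ip x x = 0 -> x = 0].

Definition nrm2 (x : H) : R[i] := ip x x.

Definition converges (u : nat -> H) (x : H) : Prop :=
  forall e : R[i], 0 < e -> exists N : nat, forall m, (N <= m)%N -> nrm2 (u m - x) < e.

Definition cauchy (u : nat -> H) : Prop :=
  forall e : R[i], 0 < e -> exists N : nat,
    forall m k, (N <= m)%N -> (N <= k)%N -> nrm2 (u m - u k) < e.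

Definition hilbert : Prop :=
  inner_product /\ forall u, cauchy u -> exists x, converges u x.

Definition closed_subspace (M : H -> Prop) : Prop :=
  [/\ M 0,
      forall (a : R[i]) x y, M x -> M y -> M (a *: x + y) &
      forall u x, (forall k, M (u k)) -> converges u x -> M x].

Definition adjoint (T Ts : H -> H) : Prop :=
  forall x y, ip (T x) y = ip x (Ts y).

Definition isometry (T Ts : H -> H) : Prop := forall x, Ts (T x) = x.

Definition unitary (T Ts : H -> H) : Prop :=
  (forall x, Ts (T x) = x) /\ (forall x, T (Ts x) = x).

(* S pure isometry: {0} is the only S-invariant (closed) subspace M
   on which S is unitary, i.e. S maps M onto M *)
Definition pure_isometry (S Ss : H -> H) : Prop :=
  isometry S Ss /\
  forall M : H -> Prop, closed_subspace M ->
    (forall x, M x -> M (S x)) ->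
    (forall y, M y -> exists2 x, M x & S x = y) ->
    forall x, M x -> x = 0.

Definition finite_dim (M : H -> Prop) : Prop :=
  exists s : seq H, forall x, M x ->
    exists c : 'I_(size s) -> R[i], x = \sum_(k < size s) c k *: s`_k.

Definition doubly_noncommuting (n : nat) (z : 'I_n -> 'I_n -> R[i])
    (V Vs : 'I_n -> H -> H) : Prop :=
  [/\ forall i j, i != j -> `|z i j| = 1,
      forall i j, i != j -> z j i = (z i j)^*,
      forall i, adjoint (V i) (Vs i),
      forall i, isometry (V i) (Vs i) &
      forall i j, i != j -> forall x, Vs i (V j x) = (z i j)^* *: V j (Vs i x)].

End Hilbert.

From Pilot Require Import Defs.
From HB Require Import structures.
From mathcomp Require Import all_boot all_order all_algebra.
From mathcomp.real_closed Require Import complex.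
Set Implicit Arguments.
Unset Strict Implicit.
Unset Printing Implicit Defensive.
Import Order.TTheory GRing.Theory Num.Theory.
Local Open Scope ring_scope.

(* For i >= l, V_i is unitary as soon as ker V_i^* = 0. Consider the joint
   kernels K_m = ker V_i^* ∩ ker V_0^* ∩ ... ∩ ker V_(m-1)^*; the doubly
   non-commuting relations make a joint kernel invariant under every V_k^* and
   under the V_k whose index is not in it. K_l = 0: the finite-dimensional
   joint kernel of V_0^*, ..., V_(l-1)^* is invariant under V_i, and a nonzero
   x in ker V_i^* would make the V_i^k x an infinite orthogonal family in it.
   If K_(m+1) = 0 then V_m maps the closed subspace K_m onto itself, since
   y - V_m V_m^* y lies in K_(m+1); purity of V_m gives K_m = 0. Descending
   from m = l to m = 0 gives ker V_i^* = 0. *)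

Lemma span_dependent (F : fieldType) (U : lmodType F) (s : seq U)
    (w : 'I_(size s).+1 -> U) :
  (forall k, exists c : 'I_(size s) -> F,
     w k = \sum_(t < size s) c t *: s`_t) ->
  exists2 a : 'I_(size s).+1 -> F, \sum_k a k *: w k = 0 & exists k, a k != 0.
Proof.
move=> /fin_all_exists [c wE].
pose C : 'M[F]_((size s).+1, size s) := \matrix_(k, t) c k t.
have : kermx C != 0.
  rewrite kermx_eq0; apply/negP => /eqP rkC.
  by have := rank_leq_col C; rewrite rkC ltnn.
case/rowV0Pn => a /sub_kermxP aC a_neq0; exists (a 0); last first.
  apply/existsP; apply: contraNT a_neq0 => /existsPn a0.
  by apply/eqP/rowP => k; rewrite mxE; apply/eqP/negPn/a0.
under eq_bigr do rewrite wE scaler_sumr.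
rewrite exchange_big big1 // => t _.
under eq_bigr do rewrite scalerA.
have aCt : \sum_k a 0 k * c k t = 0.
  transitivity ((a *m C) 0 t); last by rewrite aC mxE.
  by rewrite mxE; apply: eq_bigr => k _; rewrite mxE.
by rewrite -scaler_suml aCt scale0r.
Qed.

Section InnerProduct.
Variables (R : rcfType) (H : lmodType R[i]) (ip : H -> H -> R[i]).
Hypothesis ip_inner : inner_product ip.

Lemma ipC x y : ip y x = (ip x y)^*.
Proof. by case: ip_inner. Qed.

Lemma ipxx_ge0 x : 0 <= ip x x.
Proof. by case: ip_inner. Qed.

Lemma ipxx_eq0 x : ip x x = 0 -> x = 0.
Proof. by case: ip_inner => _ _ _; apply. Qed.

Lemma ipDl x y w : ip (x + y) w = ip x w + ip y w.
Proof.
by case: ip_inner => ipL _ _ _; have := ipL 1 x y w; rewrite scale1r mul1r.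
Qed.

Lemma ip0l w : ip 0 w = 0.
Proof. by apply: (addIr (ip 0 w)); rewrite -ipDl !add0r. Qed.

Lemma ipZl a x w : ip (a *: x) w = a * ip x w.
Proof.
by case: ip_inner => ipL _ _ _; rewrite -[a *: x]addr0 ipL ip0l addr0.
Qed.

Lemma ip0r w : ip w 0 = 0.
Proof. by rewrite ipC ip0l conjC0. Qed.

Lemma ipDr x y w : ip w (x + y) = ip w x + ip w y.
Proof. by rewrite ipC ipDl rmorphD /= -!ipC. Qed.

Lemma ipZr a x w : ip w (a *: x) = a^* * ip w x.
Proof. by rewrite ipC ipZl rmorphM /= -ipC. Qed.

Lemma ipBr x y w : ip w (x - y) = ip w x - ip w y.
Proof. by rewrite ipDr -scaleN1r ipZr rmorphN1 mulN1r. Qed.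

Lemma nrm2Z a x : nrm2 ip (a *: x) = `|a| ^+ 2 * nrm2 ip x.
Proof. by rewrite /nrm2 ipZl ipZr mulrA normCK. Qed.

Lemma nrm2N x : nrm2 ip (- x) = nrm2 ip x.
Proof. by rewrite -scaleN1r nrm2Z normrN1 expr1n mul1r. Qed.

Lemma ip_suml (I : finType) (F : I -> H) w :
  ip (\sum_k F k) w = \sum_k ip (F k) w.
Proof. by apply: (big_morph (ip^~ w)) => [x y|]; rewrite ?ipDl ?ip0l. Qed.

Lemma ipr_inj x y : (forall w, ip w x = ip w y) -> x = y.
Proof.
move=> xy; apply/eqP; rewrite -subr_eq0; apply/eqP/ipxx_eq0.
by rewrite ipBr xy subrr.
Qed.

Lemma finite_dim_orthogonal (M : H -> Prop) (v : nat -> H) :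
  finite_dim M -> (forall k, M (v k)) ->
  (forall p q, p != q -> ip (v p) (v q) = 0) -> exists k, v k = 0.
Proof.
move=> [s Ms] Mv v_orth.
have [a sum_av [k ak_neq0]] := span_dependent (fun k => Ms _ (Mv k)).
exists k; apply/ipxx_eq0/(mulfI ak_neq0); rewrite mulr0.
have := congr1 (ip^~ (v k)) sum_av; rewrite /= ip0l ip_suml (bigD1 k) //=.
rewrite big1 ?addr0 ?ipZl // => j neq_jk.
by rewrite ipZl v_orth ?mulr0.
Qed.

Section Isometry.
Variables T Ts : H -> H.
Hypothesis T_adj : Defs.adjoint ip T Ts.

Lemma adjointD x y : Ts (x + y) = Ts x + Ts y.
Proof. by apply: ipr_inj => w; rewrite -T_adj !ipDr -!T_adj. Qed.

Lemma adjointZ a x : Ts (a *: x) = a *: Ts x.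
Proof. by apply: ipr_inj => w; rewrite -T_adj !ipZr -T_adj. Qed.

Lemma adjoint0 : Ts 0 = 0.
Proof. by rewrite -(scale0r 0) adjointZ !scale0r. Qed.

Lemma adjointB x y : Ts (x - y) = Ts x - Ts y.
Proof. by rewrite adjointD -scaleN1r adjointZ scaleN1r. Qed.

Hypothesis T_iso : Defs.isometry T Ts.

Lemma isometry_ip x y : ip (T x) (T y) = ip x y.
Proof. by rewrite T_adj T_iso. Qed.

Lemma adjoint_range_compl y : Ts (y - T (Ts y)) = 0.
Proof. by rewrite adjointB T_iso subrr. Qed.

Lemma nrm2D_ker_adjoint a q :
  Ts q = 0 -> nrm2 ip (T a + q) = nrm2 ip a + nrm2 ip q.
Proof.
move=> Tsq0; have Tq0 : ip (T a) q = 0 by rewrite T_adj Tsq0 ip0r.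
rewrite /nrm2 ipDl !ipDr isometry_ip Tq0 [ip q _]ipC Tq0 conjC0.
by rewrite addr0 add0r.
Qed.

Lemma nrm2_range_split y :
  nrm2 ip y = nrm2 ip (Ts y) + nrm2 ip (y - T (Ts y)).
Proof.
by rewrite -nrm2D_ker_adjoint ?adjoint_range_compl // addrC subrK.
Qed.

Lemma nrm2_adjoint_le y : nrm2 ip (Ts y) <= nrm2 ip y.
Proof. by rewrite [leRHS]nrm2_range_split lerDl ipxx_ge0. Qed.

Lemma adjointK_of_nrm2 y : nrm2 ip (Ts y) = nrm2 ip y -> T (Ts y) = y.
Proof.
move=> /esym; rewrite nrm2_range_split -{2}[nrm2 ip (Ts y)]addr0 => /addrI.
by move=> /esym q0; apply/eqP; rewrite eq_sym -subr_eq0; apply/eqP/ipxx_eq0.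
Qed.

Lemma ker_adjoint_closed u x :
  (forall k, Ts (u k) = 0) -> converges ip u x -> Ts x = 0.
Proof.
move=> Tsu0 ux; apply: ipxx_eq0; apply/eqP/negPn/negP => Tsx_neq0.
have [N uxN] : exists N, forall m,
    (N <= m)%N -> nrm2 ip (u m - x) < nrm2 ip (Ts x).
  by apply: ux; rewrite lt_def /nrm2 ipxx_ge0 andbT.
have := le_lt_trans (nrm2_adjoint_le (u N - x)) (uxN N (leqnn N)).
by rewrite adjointB Tsu0 sub0r nrm2N ltxx.
Qed.

Lemma iter_isometry_orthogonal x p q :
  Ts x = 0 -> p != q -> ip (iter p T x) (iter q T x) = 0.
Proof.
move=> Tsx0; wlog lt_pq : p q / (p < q)%N => [orth | _].
  case: ltngtP => [lt_pq _ | lt_qp _ | //]; first by rewrite orth // ltn_eqF.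
  by rewrite ipC orth ?conjC0 // ltn_eqF.
elim: p q lt_pq => [|p IHp] [|q] //= lt_pq.
  by rewrite ipC T_adj Tsx0 ip0r conjC0.
by rewrite isometry_ip IHp.
Qed.

Lemma wandering_finite_dim (M : H -> Prop) x :
  finite_dim M -> (forall y, M y -> M (T y)) -> M x -> Ts x = 0 -> x = 0.
Proof.
move=> M_fin M_T Mx Tsx0.
have M_iter k : M (iter k T x) by elim: k => //= k; apply: M_T.
have nrm2_iter k : nrm2 ip (iter k T x) = nrm2 ip x.
  by elim: k => //= k; rewrite /nrm2 isometry_ip.
have [k /(congr1 (nrm2 ip))] := finite_dim_orthogonal M_fin M_iter
  (fun p q => iter_isometry_orthogonal Tsx0).
by rewrite nrm2_iter /nrm2 ip0l; apply: ipxx_eq0.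
Qed.

Lemma unitary_of_ker_adjoint : (forall y, Ts y = 0 -> y = 0) -> unitary T Ts.
Proof.
move=> Ts_inj; split=> [|x]; first exact: T_iso.
by apply/esym/subr0_eq/Ts_inj; apply: adjoint_range_compl.
Qed.

End Isometry.
End InnerProduct.

Section DoublyNonCommuting.
Variables (R : rcfType) (H : lmodType R[i]) (ip : H -> H -> R[i]).
Variables (n : nat) (z : 'I_n -> 'I_n -> R[i]).
Variables (V : 'I_n -> {linear H -> H}) (Vs : 'I_n -> H -> H).
Hypothesis ip_inner : inner_product ip.
Hypothesis V_dnc : doubly_noncommuting ip z (fun i => V i : H -> H) Vs.

Let z_norm i j : i != j -> `|z i j| = 1.
Proof. by case: V_dnc => z1 *; apply: z1. Qed.

Let V_adj i : Defs.adjoint ip (V i) (Vs i).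
Proof. by case: V_dnc. Qed.

Let V_iso i : Defs.isometry (V i) (Vs i).
Proof. by case: V_dnc. Qed.

Let V_rel i j x : i != j -> Vs i (V j x) = (z i j)^* *: V j (Vs i x).
Proof. by case: V_dnc => _ _ _ _ rel ij; apply: rel. Qed.

Lemma dnc_commute a b x : a != b -> V b (V a x) = (z a b)^* *: V a (V b x).
Proof.
move=> neq_ab; set w := V b (V a x).
have Vs_w : Vs a w = (z a b)^* *: V b x by rewrite /w V_rel // V_iso.
(* [Vs a] preserves the norm of [w], so [w] lies in the range of [V a]. *)
have : V a (Vs a w) = w.
  apply: (adjointK_of_nrm2 ip_inner (V_adj a) (V_iso a)).
  rewrite Vs_w (nrm2Z ip_inner) norm_conjC z_norm // expr1n mul1r.
  by rewrite /w /nrm2 !(isometry_ip (V_adj _) (V_iso _)).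
by rewrite Vs_w linearZ => ->.
Qed.

Lemma dnc_ker_adjoint a b y : a != b -> Vs a y = 0 -> Vs a (Vs b y) = 0.
Proof.
move=> neq_ab Vsa_y; apply: (ipxx_eq0 ip_inner).
set w := Vs a (Vs b y).
rewrite {2}/w -!V_adj dnc_commute // (ipZl ip_inner) V_adj Vsa_y.
by rewrite (ip0r ip_inner) mulr0.
Qed.

Definition joint_kernel (P : pred 'I_n) (x : H) : Prop :=
  forall i, P i -> Vs i x = 0.

Lemma joint_kernelS (P Q : pred 'I_n) x :
  {subset Q <= P} -> joint_kernel P x -> joint_kernel Q x.
Proof. by move=> QP Px i /QP; apply: Px. Qed.

Lemma joint_kernel_closed P : closed_subspace ip (joint_kernel P).
Proof.
split=> [i _ | a x y Px Py i Pi | u x Pu ux i Pi].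
- exact: (adjoint0 ip_inner (V_adj i)).
- by rewrite (adjointD ip_inner (V_adj i)) (adjointZ ip_inner (V_adj i)) Px ?Py
    ?scaler0 ?addr0.
- apply: (ker_adjoint_closed ip_inner (V_adj i) (V_iso i) _ ux).
  by move=> k; apply: Pu.
Qed.

Lemma joint_kernel_V P k x :
  ~~ P k -> joint_kernel P x -> joint_kernel P (V k x).
Proof.
move=> Pk Px i Pi; have neq_ik : i != k by apply: contraNneq Pk => <-.
by rewrite V_rel // Px // linear0 scaler0.
Qed.

Lemma joint_kernel_Vs P k y : joint_kernel P y -> joint_kernel P (Vs k y).
Proof.
move=> Py i Pi; have [<- | neq_ik] := eqVneq i k.
  by rewrite Py // (adjoint0 ip_inner (V_adj i)).
exact: dnc_ker_adjoint (Py i Pi).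
Qed.

Lemma joint_kernel_wandering P j x :
  ~~ P j -> finite_dim (joint_kernel P) ->
  joint_kernel (predU1 j P) x -> x = 0.
Proof.
move=> Pj P_fin jPx.
apply: (wandering_finite_dim ip_inner (V_adj j) (V_iso j) P_fin).
- by move=> y; apply: joint_kernel_V.
- by apply: joint_kernelS jPx => i Pi; apply/predU1P; right.
- by apply: jPx; rewrite !inE eqxx.
Qed.

Lemma joint_kernel_pure P k :
  ~~ P k -> pure_isometry ip (V k) (Vs k) ->
  (forall x, joint_kernel (predU1 k P) x -> x = 0) ->
  forall x, joint_kernel P x -> x = 0.
Proof.
move=> Pk [_ V_pure] kP_trivial.
apply: V_pure => [|x|y Py]; first exact: joint_kernel_closed.
  exact: joint_kernel_V.
exists (Vs k y); first exact: joint_kernel_Vs.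
apply/esym/subr0_eq/kP_trivial => i.
case/predU1P => [-> | Pi].
  exact: (adjoint_range_compl ip_inner (V_adj k)).
have neq_ik : i != k by apply: contraNneq Pk => <-.
rewrite (adjointB ip_inner (V_adj i)) V_rel // Py //.
by rewrite (joint_kernel_Vs k Py Pi) linear0 scaler0 subr0.
Qed.

Lemma dnc_ker_adjoint_trivial (j : 'I_n) l :
  (l <= j)%N -> (forall i : 'I_n, (i < l)%N -> pure_isometry ip (V i) (Vs i)) ->
  finite_dim (joint_kernel (fun i => (i < l)%N)) ->
  forall x, Vs j x = 0 -> x = 0.
Proof.
move=> le_lj V_pure l_fin.
have prefix_trivial d m : (m + d)%N = l ->
    forall x, joint_kernel (predU1 j (fun i => (i < m)%N)) x -> x = 0.
  elim: d m => [|d IHd] m; first rewrite addn0 => ->.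
    by move=> x; apply: joint_kernel_wandering l_fin; rewrite -leqNgt.
  move=> mdl; have lt_ml : (m < l)%N by rewrite -mdl addnS ltnS leq_addr.
  have lt_mn : (m < n)%N := ltn_trans lt_ml (leq_ltn_trans le_lj (ltn_ord j)).
  apply: (@joint_kernel_pure _ (Ordinal lt_mn)).
  - rewrite !inE /= ltnn orbF; apply: contraTneq le_lj => <-.
    by rewrite -ltnNge.
  - exact: V_pure.
  move=> x mx; apply: (IHd m.+1); first by rewrite addSnnS.
  apply: joint_kernelS mx => i; rewrite !inE -!val_eqE /= ltnS leq_eqVlt.
  by case/or3P => ->; rewrite ?orbT.
move=> x Vsj_x; apply: (prefix_trivial l 0 erefl) => i.
by case/predU1P => [-> //|].
Qed.

End DoublyNonCommuting.

Theorem corollary3p12 (R : rcfType) (H : lmodType R[i]) (ip : H -> H -> R[i])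
    (n : nat) (z : 'I_n -> 'I_n -> R[i]) (V : 'I_n -> {linear H -> H})
    (Vs : 'I_n -> H -> H) (l : nat) :
  hilbert ip ->
  doubly_noncommuting ip z (fun i => V i : H -> H) Vs ->
  (1 <= l <= n)%N ->
  (forall i : 'I_n, (i < l)%N -> pure_isometry ip (V i) (Vs i)) ->
  finite_dim (fun x : H => forall i : 'I_n, (i < l)%N -> Vs i x = 0) ->
  forall i : 'I_n, (l <= i)%N -> unitary (V i) (Vs i).
Proof.
move=> [ip_inner _] V_dnc _ V_pure l_fin i le_li.
have [_ _ V_adj V_iso _] := V_dnc.
apply: (unitary_of_ker_adjoint ip_inner (V_adj i) (V_iso i)).
exact: (dnc_ker_adjoint_trivial ip_inner V_dnc le_li V_pure l_fin).
Qed.
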